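(* Let $L$ be multi-group scale invariant and twice differentiable on $U=\{x\in\mathbb{R}^d: x_k\neq0\ \forall k\}$, and let $\rho:=\sup\{\lambda_{\max}(\nabla^2L(x)) : \|x_k\|_2=1\ \forall k\in[K]\}<\infty$. Then for any $x\in U$ and $v\in\mathbb{R}^d$ with $\langle x_k,v_k\rangle=0$ for all $k\in[K]$, $$L(x+v)-L(x)\le\langle v,\nabla L(x)\rangle+\frac{\rho}{2}\sum_{k=1}^K\frac{\|v_k\|_2^2}{\|x_k\|_2^2}.$$
   Context: Fix positive integers $d_1,\ldots,d_K$ with $d=\sum_k d_k$ and write $x\in\mathbb{R}^d$ as $x=(x_1,\ldots,x_K)$ with $x_k\in\mathbb{R}^{d_k}$ (consecutive blocks); similarly $v=(v_1,\dots,v_K)$. A function $f$ on $U$ is multi-group scale invariant iff $f(c_1x_1,\ldots,c_Kx_K)=f(x_1,\ldots,x_K)$ for all $x\in U$ and all $c_1,\ldots,c_K>0$. *)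

From HB Require Import structures.
From mathcomp Require Import all_boot all_order all_algebra.
From mathcomp Require Import all_classical all_reals all_analysis.
Set Implicit Arguments. Unset Strict Implicit. Unset Printing Implicit Defensive.
Import Order.TTheory GRing.Theory Num.Theory numFieldNormedType.Exports.
Local Open Scope classical_set_scope.
Local Open Scope ring_scope.

Section Defs.
Variables (R : realType) (K : nat) (dk : 'I_K -> nat).

Definition tot_dim := (\sum_(k < K) dk k)%N.

(* coordinate i (0-based) belongs to the k-th consecutive block *)
Definition in_block (k : 'I_K) (i : nat) : bool :=
  ((\sum_(j < K | (j < k)%N) dk j)%N <= i)%N && (i < \sum_(j < K | (j <= k)%N) dk j)%N.

Definition blk_sqnorm (x : 'rV[R]_tot_dim) (k : 'I_K) : R :=
  \sum_(i < tot_dim | in_block k i) x ord0 i ^+ 2.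

Definition blk_dot (x v : 'rV[R]_tot_dim) (k : 'I_K) : R :=
  \sum_(i < tot_dim | in_block k i) x ord0 i * v ord0 i.

Definition blk_nonzero (x : 'rV[R]_tot_dim) (k : 'I_K) : bool :=
  [exists i : 'I_tot_dim, in_block k i && (x ord0 i != 0)].

Definition U_set : set 'rV[R]_tot_dim := [set x | forall k, blk_nonzero x k].

(* (c_1 x_1, ..., c_K x_K) *)
Definition blk_scale (c : 'I_K -> R) (x : 'rV[R]_tot_dim) : 'rV[R]_tot_dim :=
  \row_(i < tot_dim) ((\sum_(k < K | in_block k i) c k) * x ord0 i).

Definition multi_group_scale_invariant (f : 'rV[R]_tot_dim -> R) (A : set 'rV[R]_tot_dim) :=
  forall x, A x -> forall c : 'I_K -> R, (forall k, 0 < c k) ->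
    f (blk_scale c x) = f x.

Definition e_ (i : 'I_tot_dim) : 'rV[R]_tot_dim := delta_mx ord0 i.

Definition partial (i : 'I_tot_dim) (f : 'rV[R]_tot_dim -> R) : 'rV[R]_tot_dim -> R :=
  fun y => 'D_(e_ i) f y.

Definition gradient (f : 'rV[R]_tot_dim -> R) (x : 'rV[R]_tot_dim) : 'rV[R]_tot_dim :=
  \row_(i < tot_dim) partial i f x.

Definition hessian (f : 'rV[R]_tot_dim -> R) (x : 'rV[R]_tot_dim) : 'M[R]_tot_dim :=
  \matrix_(i < tot_dim, j < tot_dim) partial j (partial i f) x.

(* twice (Frechet) differentiable on A: f differentiable and its derivative
   (i.e. each component of the gradient) differentiable at every point of A *)
Definition twice_differentiable_on (f : 'rV[R]_tot_dim -> R) (A : set 'rV[R]_tot_dim) :=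
  forall x, A x -> differentiable f x /\
    forall i : 'I_tot_dim, differentiable (partial i f) x.

Definition dot (u v : 'rV[R]_tot_dim) : R := \sum_(i < tot_dim) u ord0 i * v ord0 i.

Definition lambda_max (M : 'M[R]_tot_dim) : R := sup [set a : R | eigenvalue M a].

Definition rho_set (f : 'rV[R]_tot_dim -> R) : set R :=
  [set lambda_max (hessian f x) | x in [set x : 'rV[R]_tot_dim | forall k, blk_sqnorm x k = 1]].

End Defs.

From Pilot Require Import Defs.
From HB Require Import structures.
From mathcomp Require Import all_boot all_order all_algebra.
From mathcomp Require Import all_classical all_reals all_analysis.
From mathcomp Require Import ring lra zify.
Set Implicit Arguments. Unset Strict Implicit. Unset Printing Implicit Defensive.
Import Order.TTheory GRing.Theory Num.Theory numFieldNormedType.Exports.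
Local Open Scope classical_set_scope.
Local Open Scope ring_scope.

(* Restrict L to the segment t |-> x + t v, t in [0, 1].  Orthogonality gives
   ||x_k + t v_k||^2 = ||x_k||^2 + t^2 ||v_k||^2 >= ||x_k||^2, so every point y
   of the segment lies in U.  Scale invariance lets us rescale each block of y
   to the unit sphere without changing the second derivative along v, once v is
   rescaled with the same factors; the Hessian there is symmetric (Schwarz), so
   its Rayleigh quotient is at most its largest eigenvalue, hence at most rho.
   This bounds the second derivative by rho * sum_k ||v_k||^2 / ||y_k||^2 <=
   rho * sum_k ||v_k||^2 / ||x_k||^2, and second-order Taylor concludes.  The
   last step needs rho >= 0: L is constant along rays, so the Hessian at a
   normalised point vanishes in the radial direction. *)

Section SecondOrderTaylor.
Variable R : realType.

Lemma is_derive_mulr (a t : R) : is_derive t (1:R) (fun s : R => a * s) a.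
Proof.
have := @is_deriveZ R R^o R^o id a t 1 1 (is_derive_id t 1).
by rewrite /GRing.scale /= mulr1.
Qed.

Lemma is_derive_mulr_sqr (a t : R) :
  is_derive t (1:R) (fun s : R => a * s ^+ 2) (a * (2 * t)).
Proof.
have := @is_deriveX R R^o id 2 t 1 1 (is_derive_id t 1).
rewrite /GRing.scale /= mulr1 expr1 => dsqr.
exact: (@is_deriveZ R R^o R^o (fun s => s ^+ 2) a t 1 _ dsqr).
Qed.

Lemma le_derive_nonpos (h dh : R -> R) (b : R) : 0 <= b ->
  (forall t, is_derive t (1:R) h (dh t)) -> (forall t, 0 <= t <= b -> dh t <= 0) ->
  h b <= h 0.
Proof.
move=> b0 dh_h dh_le0; rewrite -subr_le0.
have cont : {within `[0, b], continuous h}.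
  by apply: derivable_within_continuous => t _; have [] := dh_h t.
have [c] := MVT_segment b0 (fun t _ => dh_h t) cont.
by rewrite in_itv /= => c0b ->; rewrite subr0 mulr_le0_ge0 ?dh_le0.
Qed.

Lemma taylor2_le (g g1 g2 : R -> R) (M : R) :
  (forall t, is_derive t (1:R) g (g1 t)) ->
  (forall t, is_derive t (1:R) g1 (g2 t)) ->
  (forall t, 0 <= t <= 1 -> g2 t <= M) ->
  g 1 - g 0 <= g1 0 + M / 2.
Proof.
move=> dg dg1 g2M.
have g1_le t : 0 <= t <= 1 -> g1 t - M * t <= g1 0.
  move=> /andP[t0 t1].
  have := @le_derive_nonpos (fun s => g1 s - M * s) (fun s => g2 s - M) t t0.
  rewrite mulr0 subr0; apply=> [s|s /andP[s0 st]].
    exact: is_deriveB (dg1 s) (is_derive_mulr M s).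
  by rewrite subr_le0 g2M // s0 (le_trans st t1).
suff : g 1 - g1 0 * 1 - M / 2 * 1 ^+ 2 <= g 0 - g1 0 * 0 - M / 2 * 0 ^+ 2.
  by rewrite !mulr0 !mulr1 expr0n expr1n /= mulr0 mulr1 !subr0; lra.
apply: (@le_derive_nonpos (fun s => g s - g1 0 * s - M / 2 * s ^+ 2)
  (fun s => g1 s - g1 0 - M / 2 * (2 * s))) => [|s|s s01]; first exact: ler01.
  apply: is_deriveB; first exact: is_deriveB (dg s) (is_derive_mulr _ s).
  exact: is_derive_mulr_sqr.
rewrite mulrA divfK ?pnatr_eq0 // mulrC subr_le0.
by have := g1_le s s01; lra.
Qed.

Lemma is_derive_unique (g : R -> R) t a b :
  is_derive t (1:R) g a -> is_derive t (1:R) g b -> a = b.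
Proof.
by move=> ga gb; rewrite -(@derive_val _ _ _ _ _ _ _ ga) (@derive_val _ _ _ _ _ _ _ gb).
Qed.

End SecondOrderTaylor.

Section Schwarz.
Variables (R : realType) (V : normedModType R).

Lemma differentiable_approx (g : V -> R) z : differentiable g z ->
  forall eps, 0 < eps -> exists2 d, 0 < d &
  forall w, `|w| < d -> `|g (w + z) - g z - 'd g z w| <= eps * `|w|.
Proof.
move=> dg eps e0.
have /eqaddoP H := diff_locally dg.
have /nbhs_ballP [d d0 hd] := H eps e0; exists d => // w wd.
have := hd w; rewrite -ball_normE /= sub0r normrN => /(_ wd) /=.
by rewrite opprD addrA.
Qed.

Lemma is_derive_line (f : V -> R) x v t : derivable f (x + t *: v) v ->
  is_derive t (1:R) (fun s : R => f (x + s *: v)) ('D_v f (x + t *: v)).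
Proof.
have quotE : (fun h : R => h^-1 *: (((fun s => f (x + s *: v)) \o shift t) (h *: 1)
      - f (x + t *: v)))
    = (fun h : R => h^-1 *: ((f \o shift (x + t *: v)) (h *: v) - f (x + t *: v))).
  apply: funext => h /=; congr (_ *: (f _ - _)).
  by rewrite [h *: 1]/GRing.scale /= mulr1 scalerDl addrCA addrA.
move=> d; apply: DeriveDef; first by rewrite /derivable quotE.
by rewrite /derive quotE.
Qed.

Lemma second_difference_mvt (f : V -> R) z a b s : 0 < s ->
  (forall t, 0 <= t <= s ->
     derivable f (z + s *: b + t *: a) a /\ derivable f (z + t *: a) a) ->
  exists2 th, 0 < th < s &
    f (z + s *: a + s *: b) - f (z + s *: a) - f (z + s *: b) + f z
    = ('D_a f (z + s *: b + th *: a) - 'D_a f (z + th *: a)) * s.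
Proof.
move=> s0 df.
pose phi t := f (z + s *: b + t *: a) - f (z + t *: a).
have dphi t : 0 <= t <= s -> is_derive t (1:R) phi
    ('D_a f (z + s *: b + t *: a) - 'D_a f (z + t *: a)).
  by move=> /df[d1 d2]; apply: is_deriveB; exact: is_derive_line.
have cphi : {within `[0, s], continuous phi}.
  apply: derivable_within_continuous => t; rewrite in_itv /= => /dphi.
  by case.
have [th] := MVT s0 (fun t t0s => dphi t (subset_itv_oo_cc t0s)) cphi.
rewrite in_itv /= subr0 => th0s dphi_th; exists th => //; rewrite -dphi_th.
by rewrite /phi scale0r !addr0 [z + s *: a + _]addrAC; ring.
Qed.

Lemma second_difference_approx (f : V -> R) z a b r : 0 < r ->
  (forall y, `|y - z| < r -> differentiable f y) ->
  differentiable (fun y => 'D_a f y) z ->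
  forall eps, 0 < eps -> exists2 s0, 0 < s0 & forall s, 0 < s <= s0 ->
  `| f (z + s *: a + s *: b) - f (z + s *: a) - f (z + s *: b) + f z
     - s ^+ 2 * 'D_b (fun y => 'D_a f y) z | <= eps * s ^+ 2.
Proof.
move=> r0 df dpa eps e0.
set pa := fun y => 'D_a f y.
pose C := `|a| + `|b| + 1.
have C0 : 0 < C by rewrite ltr_pwDr // addr_ge0.
have e'0 : 0 < eps / (2 * C) by rewrite divr_gt0 // mulr_gt0.
have [d d0 pa_approx] := differentiable_approx dpa e'0.
pose m := Num.min r d.
exists (m / C); first by rewrite divr_gt0 // lt_min r0.
move=> s /andP[s0 sle].
have sC : s * C <= m by rewrite -ler_pdivlMr.
have [mr md] : m <= r /\ m <= d by rewrite !ge_min !lexx ?orbT.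
have small t : 0 <= t <= s -> `|s *: b + t *: a| < s * C /\ `|t *: a| < s * C.
  move=> /andP[t0 ts].
  have ta : `|t *: a| <= s * `|a| by rewrite normrZ ger0_norm // ler_wpM2r.
  have := ler_normD (s *: b) (t *: a); rewrite normrZ gtr0_norm // => sbta.
  have := normr_ge0 a; have := normr_ge0 b.
  rewrite /C !mulrDr mulr1; nra.
have [th /andP[th0 ths] ->] : exists2 th, 0 < th < s &
    f (z + s *: a + s *: b) - f (z + s *: a) - f (z + s *: b) + f z
    = (pa (z + s *: b + th *: a) - pa (z + th *: a)) * s.
  apply: second_difference_mvt => // t ts; have [n1 n2] := small t ts.
  split; apply/diff_derivable/df.
    rewrite addrAC [z + _]addrC addrK.
    exact: lt_le_trans (lt_le_trans n1 sC) mr.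
  by rewrite [z + _]addrC addrK; exact: lt_le_trans (lt_le_trans n2 sC) mr.
have [n1 n2] := small th (introT andP (conj (ltW th0) (ltW ths))).
set w1 := s *: b + th *: a in n1; set w2 := th *: a in n2.
have err_le w : `|w| < s * C ->
    `|pa (w + z) - pa z - 'd pa z w| <= eps / (2 * C) * (s * C).
  move=> ws; apply: le_trans (pa_approx w _) _.
    exact: lt_le_trans (lt_le_trans ws sC) md.
  by rewrite ler_wpM2l ?ltW.
have lin : 'd pa z w1 - 'd pa z w2 = s * 'D_b pa z.
  by rewrite (deriveE _ dpa) /w1 /w2 linearD linearZ /= addrK.
have -> : z + s *: b + th *: a = w1 + z by rewrite [RHS]addrC addrA.
have -> : z + th *: a = w2 + z by rewrite [RHS]addrC.
have -> : (pa (w1 + z) - pa (w2 + z)) * s - s ^+ 2 * 'D_b pa z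
    = ((pa (w1 + z) - pa z - 'd pa z w1) - (pa (w2 + z) - pa z - 'd pa z w2)) * s.
  by rewrite expr2 -mulrA -lin; ring.
rewrite normrM (gtr0_norm s0) expr2 mulrA ler_pM2r //.
apply: (le_trans (ler_normB _ _)); apply: (le_trans (lerD (err_le _ n1) (err_le _ n2))).
suff -> : eps / (2 * C) * (s * C) + eps / (2 * C) * (s * C) = eps * s by [].
by field; rewrite gt_eqF.
Qed.

Lemma schwarz (f : V -> R) z a b r : 0 < r ->
  (forall y, `|y - z| < r -> differentiable f y) ->
  differentiable (fun y => 'D_a f y) z -> differentiable (fun y => 'D_b f y) z ->
  'D_b (fun y => 'D_a f y) z = 'D_a (fun y => 'D_b f y) z.
Proof.
move=> r0 df da db; apply/eqP; rewrite -subr_eq0 -normr_le0.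
apply/ler_addgt0Pr => eps e0; rewrite add0r.
have e20 : 0 < eps / 2 by rewrite divr_gt0.
have [s0 s00 ab_approx] := second_difference_approx b r0 df da e20.
have [s1 s10 ba_approx] := second_difference_approx a r0 df db e20.
pose s := Num.min s0 s1.
have s_gt0 : 0 < s by rewrite lt_min s00 s10.
have := ab_approx s; rewrite s_gt0 ge_min lexx /= => /(_ isT).
have := ba_approx s; rewrite s_gt0 ge_min lexx orbT /= => /(_ isT).
rewrite [z + s *: b + s *: a]addrAC [_ - f (z + s *: b) - _]addrAC.
set D := _ - _ - _ + f z => Eba Eab.
have s2_gt0 : 0 < s ^+ 2 by rewrite exprn_gt0.
set Dab := 'D_b _ z in Eab *; set Dba := 'D_a _ z in Eba *.
rewrite -(ler_pM2r s2_gt0).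
have -> : `|Dab - Dba| * s ^+ 2 = `|(D - s ^+ 2 * Dba) - (D - s ^+ 2 * Dab)|.
  by rewrite -[in LHS](gtr0_norm s2_gt0) -normrM; congr `|_|; ring.
apply: (le_trans (ler_normB _ _)); apply: (le_trans (lerD Eba Eab)).
by rewrite -mulrDl -splitr.
Qed.
End Schwarz.

Section RayleighQuotient.
Variables (R : realType) (n : nat).
Implicit Types (A P : 'M[R]_n) (u v w : 'rV[R]_n).

Definition bform A u w : R := (u *m A *m w^T) 0 0.
Definition qform A u : R := bform A u u.

Lemma bform_sum A u w : bform A u w = \sum_i \sum_j u 0 i * A i j * w 0 j.
Proof.
rewrite /bform mxE; under eq_bigr => j _ do rewrite !mxE big_distrl /=.
by rewrite exchange_big.
Qed.

Lemma qform1 u : qform 1%:M u = \sum_i u 0 i ^+ 2.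
Proof.
by rewrite /qform /bform mulmx1 mxE; apply: eq_bigr => i _; rewrite mxE expr2.
Qed.

Lemma qform1_ge0 u : 0 <= qform 1%:M u.
Proof. by rewrite qform1 sumr_ge0 // => i _; rewrite sqr_ge0. Qed.

Lemma qform1_gt0 u : u != 0 -> 0 < qform 1%:M u.
Proof.
move=> u0; rewrite lt_def qform1_ge0 andbT qform1; apply: contra u0.
move=> /eqP/psumr_eq0P u2_eq0; apply/eqP/rowP => i; rewrite mxE.
by apply/eqP; rewrite -sqrf_eq0 u2_eq0 // => j _; rewrite sqr_ge0.
Qed.

Lemma bform0l A w : bform A 0 w = 0.
Proof. by rewrite /bform !mul0mx mxE. Qed.

Lemma bformDl A u1 u2 w : bform A (u1 + u2) w = bform A u1 w + bform A u2 w.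
Proof. by rewrite /bform !mulmxDl mxE. Qed.

Lemma bformDr A u w1 w2 : bform A u (w1 + w2) = bform A u w1 + bform A u w2.
Proof. by rewrite /bform linearD /= mulmxDr mxE. Qed.

Lemma bformZl A c u w : bform A (c *: u) w = c * bform A u w.
Proof. by rewrite /bform -!scalemxAl mxE. Qed.

Lemma bformZr A c u w : bform A u (c *: w) = c * bform A u w.
Proof. by rewrite /bform linearZ /= -scalemxAr mxE. Qed.

Lemma bformBl A B u w : bform (A - B) u w = bform A u w - bform B u w.
Proof. by rewrite /bform mulmxBr mulmxBl !mxE. Qed.

Lemma bform_scalar c u w : bform c%:M u w = c * bform 1%:M u w.
Proof. by rewrite /bform mul_mx_scalar mulmx1 -scalemxAl mxE. Qed.

Lemma bformC A u w : A^T = A -> bform A w u = bform A u w.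
Proof.
move=> sA; rewrite /bform.
have -> : (w *m A *m u^T) 0 0 = (w *m A *m u^T)^T 0 0 by rewrite [in RHS]mxE.
by rewrite !trmx_mul trmxK sA mulmxA.
Qed.

Lemma qformZ A c u : qform A (c *: u) = c ^+ 2 * qform A u.
Proof. by rewrite /qform bformZl bformZr mulrA expr2. Qed.

Lemma continuous_sum (T : topologicalType) m (F : 'I_m -> T -> R) :
  (forall i, continuous (F i)) -> continuous (fun x => \sum_(i < m) F i x).
Proof.
move=> cF; have -> : (fun x => \sum_(i < m) F i x) = \sum_(i < m) F i.
  by apply: funext => x; rewrite fct_sumE.
apply: (big_ind (fun g : T -> R => continuous g)) => // [x|g h cg ch x].
  exact: cst_continuous.
exact: (continuousD (cg x) (ch x)).
Qed.

Lemma qform_continuous A : continuous (qform A).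
Proof.
have -> : qform A = fun u => \sum_i \sum_j u 0 i * A i j * u 0 j.
  by apply: funext => u; rewrite /qform bform_sum.
apply: continuous_sum => i; apply: continuous_sum => j x.
apply: (@continuousM _ _ (fun u : 'rV[R]_n => u 0 i * A i j) (fun u => u 0 j));
  last exact: coord_continuous.
apply: (@continuousM _ _ (fun u : 'rV[R]_n => u 0 i) (fun=> A i j));
  [exact: coord_continuous | exact: cst_continuous].
Qed.

Lemma linear_quadratic_ge0 (b Q : R) : 0 <= Q ->
  (forall c, 0 <= 2 * c * b + c ^+ 2 * Q) -> b = 0.
Proof.
move=> Q0 Hc; pose k := (Q + 1)^-1.
have Q1_gt0 : 0 < Q + 1 by rewrite ltr_pwDr.
have k_gt0 : 0 < k by rewrite invr_gt0.
have kQ : k * Q = 1 - k by rewrite -[in RHS](mulVf (lt0r_neq0 Q1_gt0)) mulrDr mulr1 addrK.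
have := Hc (- b * k).
have -> : 2 * (- b * k) * b + (- b * k) ^+ 2 * Q = - (b ^+ 2 * (k * (1 + k))).
  have -> : (- b * k) ^+ 2 * Q = b ^+ 2 * k * (k * Q) by ring.
  by rewrite kQ; ring.
rewrite oppr_ge0 => bk; apply/eqP; rewrite -sqrf_eq0 eq_le sqr_ge0 andbT.
by rewrite -(pmulr_lle0 _ (mulr_gt0 k_gt0 (addr_gt0 ltr01 k_gt0))).
Qed.

Lemma psd_qform_eq0 P u : P^T = P -> (forall w, 0 <= qform P w) ->
  qform P u = 0 -> u *m P = 0.
Proof.
move=> sP P_psd Pu0.
have bform0 w : bform P u w = 0.
  apply: (linear_quadratic_ge0 (P_psd w)) => c.
  have := P_psd (u + c *: w).
  rewrite /qform bformDl !bformDr !bformZl !bformZr (bformC u w sP) -/(qform P u) Pu0.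
  by move=> H; apply: (le_trans H); rewrite le_eqVlt; apply/orP; left; apply/eqP; ring.
apply/rowP => j; have := bform0 (delta_mx 0 j).
by rewrite /bform trmx_delta -colE [(col _ _) 0 0]mxE mxE => ->; rewrite mxE.
Qed.

Lemma qform_max_exists (i0 : 'I_n) A : exists2 us, qform 1%:M us = 1 &
  forall v, qform 1%:M v = 1 -> qform A v <= qform A us.
Proof.
pose sphere := [set v : 'rV[R]_n | qform 1%:M v = 1].
have sphere0 : sphere !=set0.
  exists (delta_mx 0 i0); rewrite /sphere /= qform1 (bigD1 i0) //= big1.
    by rewrite mxE !eqxx expr1n addr0.
  by move=> i /negbTE ne; rewrite mxE ne andbF expr0n.
have sphere_cpt : compact sphere.
  have cube_cpt := @rV_compact R n (fun=> `[-1, 1]%classic)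
    (fun _ => @segment_compact R (-1) 1).
  apply: (subclosed_compact _ cube_cpt).
    apply: (@preimage_closed _ _ (qform 1%:M) [set x | x = 1]); last exact: closed_eq.
    by move=> x _; exact: qform_continuous.
  move=> v /= v1 i; rewrite in_itv /=.
  have : v 0 i ^+ 2 <= 1.
    rewrite -v1 qform1 (bigD1 i) //= lerDl.
    by apply: sumr_ge0 => j _; exact: sqr_ge0.
  by move=> vi; apply/andP; split; nra.
have [us us1 us_max] := compact_EVT_max sphere0 sphere_cpt
  (continuous_subspaceT (@qform_continuous A)).
exists us; first by move: us1; rewrite inE.
by move=> v v1; apply: us_max; rewrite inE.
Qed.

Section Maximizer.
Variables (A : 'M[R]_n) (us : 'rV[R]_n).
Hypotheses (us1 : qform 1%:M us = 1)
  (us_max : forall v, qform 1%:M v = 1 -> qform A v <= qform A us).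

Lemma qform_le_max v : qform A v <= qform A us * qform 1%:M v.
Proof.
have [->|v0] := eqVneq v 0; first by rewrite /qform !bform0l mulr0.
have q_gt0 := qform1_gt0 v0.
pose c := (Num.sqrt (qform 1%:M v))^-1.
have c2 : c ^+ 2 = (qform 1%:M v)^-1 by rewrite exprVn sqr_sqrtr // ltW.
have := @us_max (c *: v); rewrite !qformZ c2 mulVf ?gt_eqF // => /(_ erefl).
by rewrite mulrC ler_pdivrMr // mulrC.
Qed.

Lemma eigenvalue_qform_max : A^T = A -> eigenvalue A (qform A us).
Proof.
move=> sA; pose P := (qform A us)%:M - A.
have sP : P^T = P by rewrite /P linearB /= tr_scalar_mx sA.
have qformP v : qform P v = qform A us * qform 1%:M v - qform A v.
  by rewrite /qform bformBl bform_scalar.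
have usP : us *m P = 0.
  apply: psd_qform_eq0 => // [v|]; first by rewrite qformP subr_ge0 qform_le_max.
  by rewrite qformP us1 mulr1 subrr.
apply/eigenvalueP; exists us.
  by apply/eqP; rewrite eq_sym -subr_eq0 -mul_mx_scalar -mulmxBr usP.
by apply: contra_eqN us1 => /eqP ->; rewrite /qform bform0l eq_sym oner_eq0.
Qed.

End Maximizer.

Lemma qform_le_sup_eigenvalue A u : A^T = A ->
  qform A u <= sup [set a : R | eigenvalue A a] * \sum_i u 0 i ^+ 2.
Proof.
move=> sA; rewrite -qform1.
have [i0 _|n0] := pickP (fun _ : 'I_n => true); last first.
  have -> : u = 0 by apply/rowP => i; have := n0 i.
  by rewrite /qform !bform0l mulr0.
have [us us1 us_max] := qform_max_exists i0 A.
apply: le_trans (qform_le_max us_max u) _; rewrite ler_wpM2r ?qform1_ge0 //.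
apply: ub_le_sup; last exact: eigenvalue_qform_max.
exists (qform A us) => a /eigenvalueP [w wA w0].
have : qform A w = a * qform 1%:M w by rewrite /qform /bform wA mulmx1 -scalemxAl mxE.
move=> qAw; have := qform_le_max us_max w.
by rewrite qAw ler_pM2r // qform1_gt0.
Qed.

End RayleighQuotient.

Section Blocks.
Variables (R : realType) (K : nat) (dk : 'I_K -> nat).
Local Notation n := (tot_dim dk).
Local Notation in_block := (in_block dk).
Local Notation U := (@U_set R K dk).
Implicit Types (c : 'I_K -> R) (x y v w : 'rV[R]_n).

Lemma block_end_le_start (k k' : 'I_K) : (k < k')%N ->
  (\sum_(j < K | (j <= k)%N) dk j <= \sum_(j < K | (j < k')%N) dk j)%N.
Proof.
move=> kk'; rewrite [X in (_ <= X)%N](bigID (fun j : 'I_K => (j <= k)%N)) /=.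
apply: leq_trans (leq_addr _ _); rewrite leq_eqVlt; apply/orP; left; apply/eqP.
apply: eq_bigl => j /=.
by case: (leqP j k) => jk; rewrite ?andbF ?andbT // (leq_ltn_trans jk kk').
Qed.

Lemma in_block_inj (k k' : 'I_K) (i : nat) : in_block k i -> in_block k' i -> k = k'.
Proof.
rewrite /Defs.in_block => /andP[ki1 ki2] /andP[k'i1 k'i2].
apply/val_inj; case: (ltngtP k k') => // kk'.
  by have := block_end_le_start kk'; lia.
by have := block_end_le_start kk'; lia.
Qed.

Lemma blk_scale_in c x (i : 'I_n) k : in_block k i ->
  blk_scale c x ord0 i = c k * x ord0 i.
Proof.
move=> ki; rewrite mxE (bigD1 k) //= big1 ?addr0 // => k' /andP[k'i k'k].
by move: k'k; rewrite (in_block_inj k'i ki) eqxx.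
Qed.

Lemma blk_scale_out c x (i : 'I_n) : (forall k, ~~ in_block k i) ->
  blk_scale c x ord0 i = 0.
Proof. by move=> none; rewrite mxE big_pred0 ?mul0r // => k; apply/negbTE. Qed.

Lemma blk_scaleD c x y : blk_scale c (x + y) = blk_scale c x + blk_scale c y.
Proof. by apply/rowP => i; rewrite !mxE mulrDr. Qed.

Lemma blk_scaleZ c (a : R) x : blk_scale c (a *: x) = a *: blk_scale c x.
Proof. by apply/rowP => i; rewrite !mxE mulrCA. Qed.

(* Stated on the range of [blk_scale], whose vectors vanish outside all blocks,
   so that one need not show that the blocks cover every coordinate. *)
Lemma blk_scale_cst c (a : R) x :
  blk_scale (fun=> a) (blk_scale c x) = a *: blk_scale c x.
Proof.
apply/rowP => i; rewrite [RHS]mxE.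
have [k ki|none] := pickP (fun k => in_block k i).
  by rewrite !(blk_scale_in _ _ ki).
by rewrite !blk_scale_out ?mulr0 // => k; rewrite none.
Qed.

Lemma blk_sqnorm_ge0 x k : 0 <= blk_sqnorm x k.
Proof. by apply: sumr_ge0 => i _; rewrite sqr_ge0. Qed.

Lemma blk_sqnorm_scale c x k :
  blk_sqnorm (blk_scale c x) k = c k ^+ 2 * blk_sqnorm x k.
Proof.
rewrite /blk_sqnorm mulr_sumr; apply: eq_bigr => i ki.
by rewrite (blk_scale_in _ _ ki) exprMn.
Qed.

Lemma blk_sqnorm_orthoD x v (t : R) k : blk_dot x v k = 0 ->
  blk_sqnorm (x + t *: v) k = blk_sqnorm x k + t ^+ 2 * blk_sqnorm v k.
Proof.
rewrite /blk_sqnorm /blk_dot => xv0.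
have -> : \sum_(i < n | in_block k i) (x + t *: v) ord0 i ^+ 2 =
    \sum_(i < n | in_block k i) (x ord0 i ^+ 2 + t ^+ 2 * v ord0 i ^+ 2
                                + (2 * t) * (x ord0 i * v ord0 i)).
  by apply: eq_bigr => i _; rewrite !mxE; ring.
by rewrite !big_split /= -!mulr_sumr xv0 mulr0 addr0.
Qed.

Lemma blk_nonzeroE x k : blk_nonzero x k = (0 < blk_sqnorm x k).
Proof.
apply/idP/idP => [/existsP[i /andP[ki xi]]|].
  rewrite /blk_sqnorm (bigD1 i) //=; apply: ltr_pwDl.
    by rewrite lt_def sqrf_eq0 xi sqr_ge0.
  by apply: sumr_ge0 => ? _; rewrite sqr_ge0.
apply: contraTT => /existsPn x_blk0; rewrite -leNgt /blk_sqnorm big1 // => i ki.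
by move: (x_blk0 i); rewrite ki negbK => /eqP ->; rewrite expr0n.
Qed.

Lemma sum_by_blocks (F : 'I_n -> R) :
  (forall i : 'I_n, (forall k, ~~ in_block k i) -> F i = 0) ->
  \sum_i F i = \sum_(k < K) \sum_(i < n | in_block k i) F i.
Proof.
move=> F0; under [RHS]eq_bigr => k _ do rewrite big_mkcond /=.
rewrite exchange_big /=; apply: eq_bigr => i _.
have [k ki|none] := pickP (fun k => in_block k i).
  rewrite (bigD1 k) //= ki big1 ?addr0 // => k' k'k.
  by case: ifP => // k'i; move: k'k; rewrite (in_block_inj k'i ki) eqxx.
by rewrite big1 ?F0 // => k; rewrite none.
Qed.

Lemma sqr_sum_blk_scale c w :
  \sum_i blk_scale c w ord0 i ^+ 2 = \sum_(k < K) c k ^+ 2 * blk_sqnorm w k.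
Proof.
rewrite sum_by_blocks => [|i none]; last by rewrite blk_scale_out // expr0n.
by apply: eq_bigr => k _; rewrite -blk_sqnorm_scale.
Qed.

Lemma U_set_scale c y : (forall k, 0 < c k) -> U y -> U (blk_scale c y).
Proof.
move=> c_gt0 Uy k; rewrite blk_nonzeroE blk_sqnorm_scale mulr_gt0 ?exprn_gt0 //.
by rewrite -blk_nonzeroE.
Qed.

Lemma U_set_ball z : U z ->
  exists2 r : R, 0 < r & forall y, `|y - z| < r -> U y.
Proof.
move=> Uz.
have : \forall y \near z, forall k, blk_nonzero y k.
  apply: (@filter_forall _ _ (fun k y => blk_nonzero y k) (nbhs z)) => k.
  have /existsP [i /andP[ki zi]] := Uz k.
  have zi_nbhs : nbhs (z ord0 i) [set a : R | a != 0].
    apply/nbhs_ballP; exists `|z ord0 i|; first by rewrite /= normr_gt0.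
    move=> a; rewrite -ball_normE /=; apply: contraTN => /eqP ->.
    by rewrite subr0 ltxx.
  have zi_near := @coord_continuous R 1 n ord0 i z _ zi_nbhs.
  near=> y; apply/existsP; exists i; rewrite ki /=.
  by near: y.
move=> /nbhs_ballP [r r0 hr]; exists r => // y yz; apply: hr.
by rewrite -ball_normE /= distrC.
Unshelve. all: by end_near.
Qed.

Lemma blk_sqnorm_le_orthoD x v (t : R) k : blk_dot x v k = 0 ->
  blk_sqnorm x k <= blk_sqnorm (x + t *: v) k.
Proof.
by move=> xv0; rewrite blk_sqnorm_orthoD // lerDl mulr_ge0 ?sqr_ge0 ?blk_sqnorm_ge0.
Qed.

Lemma U_set_orthoD x v (t : R) : U x -> (forall k, blk_dot x v k = 0) ->
  U (x + t *: v).
Proof.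
move=> Ux xv0 k; rewrite blk_nonzeroE.
by apply: lt_le_trans (blk_sqnorm_le_orthoD t (xv0 k)); rewrite -blk_nonzeroE.
Qed.

Definition blk_normalizer y (k : 'I_K) : R := (Num.sqrt (blk_sqnorm y k))^-1.

Lemma blk_normalizer_gt0 y : U y -> forall k, 0 < blk_normalizer y k.
Proof. by move=> Uy k; rewrite invr_gt0 sqrtr_gt0 -blk_nonzeroE. Qed.

Lemma blk_normalizer_sqr y k : blk_normalizer y k ^+ 2 = (blk_sqnorm y k)^-1.
Proof. by rewrite exprVn sqr_sqrtr // blk_sqnorm_ge0. Qed.

Lemma blk_sqnorm_normalize y : U y ->
  forall k, blk_sqnorm (blk_scale (blk_normalizer y) y) k = 1.
Proof.
move=> Uy k; rewrite blk_sqnorm_scale blk_normalizer_sqr mulVf // gt_eqF //.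
by rewrite -blk_nonzeroE.
Qed.

End Blocks.

Section LineDerivatives.
Variables (R : realType) (K : nat) (dk : 'I_K -> nat).
Local Notation n := (tot_dim dk).
Implicit Types (f : 'rV[R]_n -> R) (y v : 'rV[R]_n).

Lemma derive_dot_gradient f y v : differentiable f y ->
  'D_v f y = dot v (gradient f y).
Proof.
move=> df; rewrite deriveE // {1}(row_sum_delta v) linear_sum.
by apply: eq_bigr => i _; rewrite linearZ /= mxE /partial /e_ deriveE.
Qed.

Lemma is_derive_line_dot f y v t : differentiable f (y + t *: v) ->
  is_derive t (1:R) (fun s => f (y + s *: v)) (dot v (gradient f (y + t *: v))).
Proof.
by move=> df; rewrite -derive_dot_gradient //; exact/is_derive_line/diff_derivable.
Qed.

Lemma is_derive_line_gradient f y v t :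
  (forall i, differentiable (partial i f) (y + t *: v)) ->
  is_derive t (1:R) (fun s => dot v (gradient f (y + s *: v)))
    (qform (hessian f (y + t *: v)) v).
Proof.
move=> dp.
have -> : (fun s => dot v (gradient f (y + s *: v)))
    = \sum_(i < n) (fun s => v ord0 i * partial i f (y + s *: v)).
  by apply: funext => s; rewrite fct_sumE; apply: eq_bigr => i _; rewrite mxE.
have -> : qform (hessian f (y + t *: v)) v
    = \sum_(i < n) v ord0 i *: 'D_v (partial i f) (y + t *: v).
  rewrite /qform bform_sum; apply: eq_bigr => i _.
  rewrite derive_dot_gradient // /dot scaler_sumr; apply: eq_bigr => j _.
  by rewrite !mxE /GRing.scale /=; ring.
apply: is_derive_sum => i.
exact: is_deriveZ (is_derive_line (diff_derivable (dp i))).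
Qed.

End LineDerivatives.

Section ScaleInvariantHessian.
Variables (R : realType) (K : nat) (dk : 'I_K -> nat).
Local Notation n := (tot_dim dk).
Local Notation U := (@U_set R K dk).
Variable L : 'rV[R]_n -> R.
Hypothesis L_C2 : twice_differentiable_on L U.
Implicit Types (x y z v w : 'rV[R]_n).

Lemma hessian_sym z : U z -> (hessian L z)^T = hessian L z.
Proof.
move=> Uz; have [r r0 r_U] := U_set_ball Uz.
apply/matrixP => i j; rewrite !mxE /partial.
have dL y : `|y - z| < r -> differentiable L y by move=> /r_U /L_C2 [].
have [_ dp] := L_C2 Uz.
exact: schwarz r0 dL (dp j) (dp i).
Qed.

Lemma is_derive2_line_eq y v z w :
  (forall t, U (y + t *: v)) -> (forall t, U (z + t *: w)) ->
  (forall t, L (y + t *: v) = L (z + t *: w)) ->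
  qform (hessian L y) v = qform (hessian L z) w.
Proof.
move=> Uyv Uzw Lyz.
have dot_eq t : dot v (gradient L (y + t *: v)) = dot w (gradient L (z + t *: w)).
  apply: (@is_derive_unique _ (fun s => L (y + s *: v)) t).
    by apply: is_derive_line_dot; have [] := L_C2 (Uyv t).
  rewrite (funext (fun s => Lyz s)).
  by apply: is_derive_line_dot; have [] := L_C2 (Uzw t).
have d1 := is_derive_line_gradient (proj2 (L_C2 (Uyv 0))).
have d2 := is_derive_line_gradient (proj2 (L_C2 (Uzw 0))).
rewrite -(funext dot_eq) in d2.
by have := is_derive_unique d1 d2; rewrite !scale0r !addr0.
Qed.

Hypothesis L_inv : multi_group_scale_invariant L U.

Lemma qform_hessian_blk_scale c y v : (forall k, 0 < c k) ->
  (forall t, U (y + t *: v)) ->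
  qform (hessian L y) v = qform (hessian L (blk_scale c y)) (blk_scale c v).
Proof.
move=> c_gt0 Uyv; apply: is_derive2_line_eq => // t.
  by rewrite -blk_scaleZ -blk_scaleD; exact: U_set_scale.
by rewrite -blk_scaleZ -blk_scaleD L_inv.
Qed.

Hypothesis rho_ub : has_ubound (rho_set L).
Local Notation rho := (sup (rho_set L)).

Lemma qform_hessian_le_rho z w : U z -> (forall k, blk_sqnorm z k = 1) ->
  qform (hessian L z) w <= rho * \sum_i w ord0 i ^+ 2.
Proof.
move=> Uz z1; apply: le_trans (qform_le_sup_eigenvalue _ (hessian_sym Uz)) _.
apply: ler_wpM2r; first by apply: sumr_ge0 => i _; exact: sqr_ge0.
by apply: ub_le_sup => //; exists z.
Qed.

Lemma rho_ge0 x (k0 : 'I_K) : U x -> 0 <= rho.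
Proof.
move=> Ux; set z := blk_scale (blk_normalizer x) x.
have Uz : U z := U_set_scale (blk_normalizer_gt0 Ux) Ux.
have ray t : z + t *: z = blk_scale (fun=> 1 + t) z.
  by rewrite blk_scale_cst scalerDl scale1r.
have U_ray t : -1 < t -> U (z + t *: z).
  by move=> t1; rewrite ray; apply: U_set_scale => // _; lra.
have L_ray t : -1 < t -> L (z + t *: z) = L z.
  by move=> t1; rewrite ray L_inv // => _; lra.
have grad0 t : -1 < t -> dot z (gradient L (z + t *: z)) = 0.
  move=> t1; apply: (@is_derive_unique _ (fun s => L (z + s *: z)) t).
    by apply: is_derive_line_dot; have [] := L_C2 (U_ray t t1).
  apply: (@near_eq_is_derive _ _ _ (cst (L z))).
  by near=> s; rewrite /= L_ray //; near: s; exact: lt_nbhsr.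
have qz : qform (hessian L z) z = 0.
  have := is_derive_line_gradient (proj2 (L_C2 (U_ray 0 (ltrN10 R)))).
  rewrite scale0r addr0 => d; apply: (is_derive_unique d).
  apply: (@near_eq_is_derive _ _ _ (cst 0)).
  by near=> s; rewrite /= grad0 //; near: s; exact: lt_nbhsr (ltrN10 R).
have := qform_hessian_le_rho z Uz (blk_sqnorm_normalize Ux).
rewrite qz sqr_sum_blk_scale.
under eq_bigr => k _ do rewrite -blk_sqnorm_scale blk_sqnorm_normalize //.
by rewrite pmulr_lge0 // sumr_const card_ord ltr0n (leq_ltn_trans _ (ltn_ord k0)).
Unshelve. all: by end_near.
Qed.

Lemma qform_hessian_segment_le x v t : U x -> (forall k, blk_dot x v k = 0) ->
  qform (hessian L (x + t *: v)) v
    <= rho * \sum_(k < K) blk_sqnorm v k / blk_sqnorm x k.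
Proof.
move=> Ux xv0; set y := x + t *: v.
have Uy : U y := U_set_orthoD t Ux xv0.
have Uyv s : U (y + s *: v) by rewrite -addrA -scalerDl; exact: U_set_orthoD.
rewrite (qform_hessian_blk_scale (blk_normalizer_gt0 Uy) Uyv).
apply: le_trans (qform_hessian_le_rho _ (U_set_scale (blk_normalizer_gt0 Uy) Uy)
  (blk_sqnorm_normalize Uy)) _.
rewrite sqr_sum_blk_scale.
have [k0 _|noK] := pickP (fun _ : 'I_K => true); last first.
  by rewrite !big1 // => k; have := noK k.
apply: ler_wpM2l; first exact: rho_ge0 k0 Ux.
apply: ler_sum => k _; rewrite blk_normalizer_sqr mulrC.
apply: ler_wpM2l; first exact: blk_sqnorm_ge0.
have x_gt0 : 0 < blk_sqnorm x k by rewrite -blk_nonzeroE.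
rewrite lef_pV2 ?posrE ?blk_sqnorm_le_orthoD //.
exact: lt_le_trans x_gt0 (blk_sqnorm_le_orthoD t (xv0 k)).
Qed.

End ScaleInvariantHessian.

Unset Implicit Arguments.

Theorem mainTheorem5 (R : realType) (K : nat) (dk : 'I_K -> nat)
  (hdk : forall k, (0 < dk k)%N)
  (L : 'rV[R]_(tot_dim dk) -> R)
  (hinv : multi_group_scale_invariant L ((@U_set R K dk)))
  (hdiff : twice_differentiable_on L ((@U_set R K dk)))
  (hrho : has_ubound (rho_set L)) :
  forall (x v : 'rV[R]_(tot_dim dk)), (@U_set R K dk) x ->
    (forall k, blk_dot x v k = 0) ->
    L (x + v) - L x <=
      dot v (gradient L x)
      + sup (rho_set L) / 2 * \sum_(k < K) blk_sqnorm v k / blk_sqnorm x k.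
Proof.
move=> x v Ux xv0.
have C2_line t := hdiff _ (U_set_orthoD t Ux xv0).
have := taylor2_le (fun t => is_derive_line_dot (proj1 (C2_line t)))
  (fun t => is_derive_line_gradient (proj2 (C2_line t)))
  (fun t _ => qform_hessian_segment_le hdiff hinv hrho t Ux xv0).
by rewrite scale1r scale0r addr0 mulrAC.
Qed.
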